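(* Let $(V,C,\sigma)$ be any election with $|V|=n$. For each candidate $a\in C$, the integral domination graph $G(a)$ admits a perfect matching if and only if the $(p^{\mathrm{uni}},q^{\mathrm{plu}})$-domination graph $G_{p^{\mathrm{uni}},q^{\mathrm{plu}}}(a)$ admits a fractional perfect matching. Consequently, there exists a candidate $a\in C$ whose integral domination graph admits a perfect matching, i.e.\ for which there is a bijection $M:V\to V$ with $a\succeq_i \mathrm{top}(M(i))$ for every $i\in V$.
   Context: An election consists of voters $V$ ($|V|=n\ge1$), a finite nonempty candidate set $C$, and a profile of linear orders $\sigma_i$ over $C$; $a\succeq_i c$ means $a=c$ or $i$ ranks $a$ above $c$; $\mathrm{top}(i)$ is $i$'s first choice; $\mathrm{plu}(c)=|\{i:\mathrm{top}(i)=c\}|$. Weights: $p^{\mathrm{uni}}(i)=1/n$ for all $i\in V$, and $q^{\mathrm{plu}}(c)=\mathrm{plu}(c)/n$ for all $c\in C$. For weight vectors $p$ on $V$ and $q$ on $C$ (nonnegative, summing to $1$), the $(p,q)$-domination graph $G_{p,q}(a)$ is the vertex-weighted bipartite graph with left vertices $V$ (weights $p(i)$), right vertices $C$ (weights $q(c)$), and edge $(i,c)$ iff $a\succeq_i c$; a fractional perfect matching is a nonnegative edge weighting whose total at each vertex equals that vertex's weight. The integral domination graph $G(a)$ is the bipartite graph with both sides copies of $V$ and edge $(i,j)$ iff $a\succeq_i\mathrm{top}(j)$. *)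

From mathcomp Require Import all_boot all_order all_algebra all_fingroup.
Set Implicit Arguments. Unset Strict Implicit. Unset Printing Implicit Defensive.
Import Order.TTheory GRing.Theory Num.Theory.
Local Open Scope ring_scope.

(* A profile: for each voter i, a strict preference relation [pref i]
   ([pref i a c] means i ranks a strictly above c). *)
Definition is_linear_order (C : finType) (r : rel C) : Prop :=
  [/\ irreflexive r, transitive r & forall x y, x != y -> r x y || r y x].

Definition wpref (V C : finType) (pref : V -> rel C) (i : V) (a c : C) : bool :=
  (a == c) || pref i a c.

Definition is_top (V C : finType) (pref : V -> rel C) (top : V -> C) : Prop :=
  forall i c, wpref pref i (top i) c.

Definition plu (V C : finType) (top : V -> C) (c : C) : nat :=
  #|[set i | top i == c]|.

Definition p_uni (R : realFieldType) (V : finType) (i : V) : R := (#|V|%:R)^-1.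
Definition q_plu (R : realFieldType) (V C : finType) (top : V -> C) (c : C) : R :=
  (plu top c)%:R / #|V|%:R.

(* Fractional perfect matching in the (p,q)-domination graph G_{p,q}(a):
   nonnegative edge weights, supported on edges (i,c) with a >=_i c,
   whose total at each vertex equals its weight. *)
Definition has_frac_pm (R : realFieldType) (V C : finType) (pref : V -> rel C)
  (p : V -> R) (q : C -> R) (a : C) : Prop :=
  exists w : V -> C -> R,
    [/\ forall i c, 0 <= w i c,
        forall i c, ~~ wpref pref i a c -> w i c = 0,
        forall i, \sum_(c : C) w i c = p i
      & forall c, \sum_(i : V) w i c = q c].

(* Perfect matching in the integral domination graph G(a): both sides are
   copies of V, edge (i,j) iff a >=_i top j; a perfect matching is a
   bijection M : V -> V along edges. *)
Definition has_int_pm (V C : finType) (pref : V -> rel C) (top : V -> C) (a : C) : Prop :=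
  exists M : {perm V}, forall i, wpref pref i a (top (M i)).

(* The equivalence goes through Hall's theorem for G(a), whose edge (i, j)
   depends on j only through top j.  A perfect matching M yields the fractional
   matching with weight 1/n on each edge (i, top (M i)).  Conversely, summing a
   fractional matching over the rows of a set S of voters bounds |S|/n by the
   q^plu-mass of the candidates that a dominates for some voter of S, i.e. by
   |N(S)|/n, so Hall's condition holds.  For existence, let the voters in turn
   consume, among the top choices of the remaining voters, the one they like
   least: every voter weakly prefers the top choice consumed last to the one it
   consumed. *)

From mathcomp Require Import all_boot all_algebra all_fingroup.
From mathcomp Require Import zify.
Set Implicit Arguments. Unset Strict Implicit. Unset Printing Implicit Defensive.
Import GRing.Theory Num.Theory.

Section Hall.
Variables T T' : finType.
Implicit Types (r : T -> T' -> bool) (A S : {set T}) (Y : {set T'}).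

Definition neighbours r S : {set T'} := [set y | [exists x in S, r x y]].

Definition avoid r Y x y := r x y && (y \notin Y).

Definition hall_cond r A := forall S, S \subset A -> #|S| <= #|neighbours r S|.

Definition matching_on r A (f : T -> T') :=
  {in A &, injective f} /\ {in A, forall x, r x (f x)}.

Lemma neighboursP r S y :
  reflect (exists2 x, x \in S & r x y) (y \in neighbours r S).
Proof.
rewrite inE; apply: (iffP existsP) => [[x /andP[]]|[x xS rxy]]; first by exists x.
by exists x; rewrite xS.
Qed.

Lemma neighboursU r S1 S2 :
  neighbours r (S1 :|: S2) = neighbours r S1 :|: neighbours r S2.
Proof.
apply/setP => y; rewrite in_setU; apply/neighboursP/orP.
  by case=> x; rewrite inE => /orP[] xS rxy; [left|right]; apply/neighboursP; exists x.
by case=> /neighboursP[x xS rxy]; exists x; rewrite // inE xS ?orbT.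
Qed.

Lemma neighbours_avoid r Y S : neighbours (avoid r Y) S = neighbours r S :\: Y.
Proof.
apply/setP => y; rewrite in_setD andbC; apply/neighboursP/andP.
  by case=> x xS /andP[rxy yY]; split=> //; apply/neighboursP; exists x.
by case=> /neighboursP[x xS rxy] yY; exists x; rewrite // /avoid rxy.
Qed.

Lemma matching_on_image r A f : matching_on r A f -> f @: A \subset neighbours r A.
Proof.
by case=> _ fr; apply/subsetP => _ /imsetP[x xA ->]; apply/neighboursP; exists x; rewrite ?fr.
Qed.

Lemma matching_on_glue r Y A A1 f1 f2 : A1 \subset A ->
  matching_on r A1 f1 -> f1 @: A1 \subset Y ->
  matching_on (avoid r Y) (A :\: A1) f2 ->
  matching_on r A (fun x => if x \in A1 then f1 x else f2 x).
Proof.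
move=> sA1A [f1inj f1r] f1Y [f2inj f2r].
have f1xY x : x \in A1 -> f1 x \in Y by move=> xA1; apply: (subsetP f1Y); apply: imset_f.
have f2x x : x \in A -> x \notin A1 -> r x (f2 x) && (f2 x \notin Y).
  by move=> xA xA1; apply: f2r; rewrite inE xA xA1.
split=> [x x' xA x'A|x xA]; last first.
  by case: ifP => xA1; [apply: f1r | case/andP: (f2x x xA (negbT xA1))].
case: ifP => xA1; case: ifP => x'A1.
- exact: f1inj.
- by move=> e; have /andP[_] := f2x x' x'A (negbT x'A1); rewrite -e f1xY.
- by move=> e; have /andP[_] := f2x x xA (negbT xA1); rewrite e f1xY.
- by apply: f2inj; rewrite inE ?xA1 ?x'A1 ?xA ?x'A.
Qed.

Lemma hall_cond_tight r A S0 : hall_cond r A -> S0 \subset A ->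
  #|neighbours r S0| <= #|S0| ->
  hall_cond (avoid r (neighbours r S0)) (A :\: S0).
Proof.
move=> hA sS0A tight S sS; rewrite neighbours_avoid.
have sSA : S \subset A by apply: subset_trans sS (subsetDl _ _).
have SS0 : S :&: S0 = set0.
  apply/disjoint_setI0; rewrite -[S0]setCK -subsets_disjoint.
  by apply: subset_trans sS _; rewrite setDE subsetIr.
have := hA (S :|: S0); rewrite subUset sSA sS0A neighboursU cardsU SS0 cards0 subn0.
move=> /(_ isT); move: tight; set N := neighbours r S; set N0 := neighbours r S0.
have := cardsU N N0; have := cardsD N N0; have := subset_leq_card (subsetIr N N0).
lia.
Qed.

Lemma hall_cond_surplus r A x y : x \in A ->
  (forall S, S \subset A :\ x -> S != set0 -> #|S| < #|neighbours r S|) ->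
  hall_cond (avoid r [set y]) (A :\ x).
Proof.
move=> xA surplus S sS; rewrite neighbours_avoid.
have [->|nS] := eqVneq S set0; first by rewrite cards0.
have := surplus S sS nS; have := cardsD1 y (neighbours r S).
case: (y \in _) => /=; lia.
Qed.

(* [y0] is only the value of [f] outside [A], which may be empty. *)
Theorem hall_marriage (y0 : T') r A : hall_cond r A -> exists f, matching_on r A f.
Proof.
have [k ltAk] := ubnP #|A|; elim: k => // k IHk in r A ltAk *; move=> hA.
have [->|[x xA]] := set_0Vmem A; first by exists (fun=> y0); split=> ?; rewrite inE.
have ltAx : #|A :\ x| < k by move: ltAk; rewrite (cardsD1 x A) xA.
(* Either a nonempty set avoiding x is tight, and it is matched separately from
   its complement, or x can be matched to any neighbour. *)
have [|surplus] := boolP [exists S : {set T},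
  [&& S \subset A :\ x, S != set0 & #|neighbours r S| <= #|S|]].
  case/existsP=> S0 /and3P[sS0 nS0 tight].
  have sS0A : S0 \subset A := subset_trans sS0 (subsetDl _ _).
  have [f1 f1M] : exists f1, matching_on r S0 f1.
    apply: IHk (fun S sS => hA S (subset_trans sS sS0A)).
    by have := subset_leq_card sS0; lia.
  have [f2 f2M] : exists f2, matching_on (avoid r (neighbours r S0)) (A :\: S0) f2.
    apply: IHk (hall_cond_tight hA sS0A tight).
    by rewrite cardsDS //; move: nS0 ltAk; rewrite -card_gt0; lia.
  by exists (fun z => if z \in S0 then f1 z else f2 z);
    apply: matching_on_glue sS0A f1M (matching_on_image f1M) f2M.
have {}surplus S : S \subset A :\ x -> S != set0 -> #|S| < #|neighbours r S|.
  by move=> sS nS; move/existsPn: surplus => /(_ S); rewrite sS nS ltnNge.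
have [y /neighboursP[_ /set1P-> rxy]] : exists y, y \in neighbours r [set x].
  by apply/card_gt0P; rewrite -(cards1 x) hA // sub1set.
have [f2 f2M] := IHk (avoid r [set y]) (A :\ x) ltAx
  (hall_cond_surplus y xA surplus).
exists (fun z => if z \in [set x] then y else f2 z).
apply: matching_on_glue f2M; rewrite ?sub1set // ?imset_set1 //.
by split=> [? ? /set1P-> /set1P->|? /set1P->].
Qed.

End Hall.

Local Open Scope ring_scope.

Lemma fractional_hall_cond (R : numDomainType) (T T' : finType)
    (r : T -> T' -> bool) (w : T -> T' -> R) (S : {set T}) :
  (forall x y, 0 <= w x y) -> (forall x y, ~~ r x y -> w x y = 0) ->
  \sum_(x in S) \sum_y w x y <= \sum_(y in neighbours r S) \sum_x w x y.
Proof.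
move=> w_ge0 w_off.
have row_in_nbh x : x \in S -> \sum_y w x y = \sum_(y in neighbours r S) w x y.
  move=> xS; rewrite [LHS](bigID [in neighbours r S]) /= [X in _ + X]big1 ?addr0 //.
  by move=> y /neighboursP yN; apply/w_off/negP => rxy; apply: yN; exists x.
rewrite (eq_bigr _ row_in_nbh) exchange_big /=.
apply: ler_sum => y _; rewrite [X in _ <= X](bigID [in S]) /= lerDl.
exact: sumr_ge0.
Qed.

Lemma linear_order_least (T : finType) (r : rel T) (S : {set T}) c0 :
  is_linear_order r -> c0 \in S ->
  exists2 c, c \in S & {in S, forall d, (d == c) || r d c}.
Proof.
move=> [irr tr tot] c0S.
case: (arg_maxnP (fun c => #|[set d | r d c]|) c0S) => c cS cmax.
exists c => // d dS; have [//|ndc /=] := eqVneq d c.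
case/orP: (tot _ _ ndc) => // rcd.
suff : (#|[set e | r e c]| < #|[set e | r e d]|)%N.
  by move=> lt; have := cmax d dS; rewrite /= leqNgt lt.
apply: proper_card; apply/properP; split.
  by apply/subsetP => e; rewrite !inE => rec; apply: tr rcd.
by exists c; rewrite !inE ?rcd ?irr.
Qed.

Section Election.
Variables (V C : finType) (pref : V -> rel C) (top : V -> C).

Definition dom_edge (a : C) (i j : V) : bool := wpref pref i a (top j).

Lemma int_pm_of_injective a (f : V -> V) :
  injective f -> (forall i, dom_edge a i (f i)) -> has_int_pm pref top a.
Proof. by move=> finj fa; exists (perm finj) => i; rewrite permE; apply: fa. Qed.

Lemma card_preimset_top (D : {set C}) : #|top @^-1: D| = (\sum_(c in D) plu top c)%N.
Proof.
rewrite -sum1dep_card (partition_big top [in D]) //=.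
apply: eq_bigr => c cD; rewrite /plu -sum1dep_card.
by apply: eq_bigl => j; rewrite andb_idl // => /eqP ->.
Qed.

Lemma frac_pm_of_int_pm (R : realFieldType) a :
  has_int_pm pref top a -> has_frac_pm pref (@p_uni R V) (q_plu R top) a.
Proof.
case=> M hM; exists (fun i c => if c == top (M i) then (#|V|%:R)^-1 else 0); split.
- by move=> i c; case: eqP; rewrite // invr_ge0.
- by move=> i c; case: eqP => // ->; rewrite hM.
- by move=> i; rewrite -big_mkcond /= big_pred1_eq.
move=> c; rewrite -big_mkcond /= sumr_const /q_plu mulrC mulr_natr; congr (_ *+ _).
rewrite /plu -(card_preimset _ (@perm_inj _ M)); apply: eq_card => i.
by rewrite !inE eq_sym.
Qed.

Lemma hall_cond_of_frac_pm (R : realFieldType) a : (0 < #|V|)%N ->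
  has_frac_pm pref (@p_uni R V) (q_plu R top) a -> hall_cond (dom_edge a) setT.
Proof.
move=> V_gt0 [w [w_ge0 w_off row col]] S _.
set N := neighbours (fun i => wpref pref i a) S.
have -> : neighbours (dom_edge a) S = top @^-1: N by apply/setP => j; rewrite !inE.
rewrite card_preimset_top -(ler_nat R) -(@ler_pM2r _ (#|V|%:R)^-1) ?invr_gt0 ?ltr0n //.
have := fractional_hall_cond S w_ge0 w_off.
rewrite (eq_bigr _ (fun i _ => row i)) (eq_bigr _ (fun c _ => col c)).
by rewrite /p_uni /q_plu sumr_const natr_sum mulr_suml mulr_natl.
Qed.

Lemma int_pm_of_matching a (f : V -> V) :
  matching_on (dom_edge a) setT f -> has_int_pm pref top a.
Proof.
case=> finj fa; apply: (@int_pm_of_injective a f) => [x y|i].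
  by apply: finj; rewrite inE.
by apply: fa; rewrite inE.
Qed.

Hypothesis pref_linear : forall i, is_linear_order (pref i).

(* [c0] is the answer when no voter is left; otherwise the answer is the top
   choice consumed last, which every voter weakly prefers to its own. *)
Lemma veto_by_consumption (c0 : C) (l l2 : seq V) : uniq l -> size l = size l2 ->
  exists a, exists g : V -> V, [/\ a \in c0 :: map top l2,
    perm_eq (map g l) l2 & {in l, forall i, dom_edge a i (g i)}].
Proof.
elim: l l2 c0 => [|i l IHl] [|j0 l2] c0 //=.
  by exists c0, id; rewrite inE eqxx.
case/andP=> il ul [sz]; set L := j0 :: l2.
have [_ /imsetP[j jL ->] jmin] :=
  linear_order_least (pref_linear i) (imset_f top (mem_head j0 l2) : top j0 \in top @: L).
have szL : size l = size (rem j L) by rewrite size_rem.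
have [a [g [aL gperm ga]]] := IHl (rem j L) (top j) ul szL.
have aS : a \in top @: L.
  case/predU1P: aL => [->|/mapP[k /mem_rem kL ->]]; exact: imset_f.
exists a, (fun z => if z == i then j else g z); split.
- by apply: mem_behead; case/imsetP: aS => k kL ->; apply: (map_f top kL).
- rewrite eqxx (eq_in_map _ g l).1 => [|z zl]; last by case: eqP zl il => // ->->.
  by rewrite perm_sym (perm_trans (perm_to_rem jL)) // perm_cons perm_sym.
move=> z; rewrite inE; case: eqP => [-> _|_ /= zl]; first exact: jmin.
exact: ga.
Qed.

Lemma exists_int_pm (c0 : C) : exists a, has_int_pm pref top a.
Proof.
have [a [g [_ gperm ga]]] := veto_by_consumption c0 (enum_uniq V) (erefl (size (enum V))).
exists a; apply: (@int_pm_of_injective a g) => [|i]; last by apply: ga; rewrite mem_enum.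
by apply/injectiveP; rewrite /injectiveb /dinjectiveb (perm_uniq gperm) enum_uniq.
Qed.

End Election.

Theorem corollary1 (R : realFieldType) (V C : finType)
  (pref : V -> rel C) (top : V -> C)
  (hV : (0 < #|V|)%N) (hC : (0 < #|C|)%N)
  (hlin : forall i, is_linear_order (pref i))
  (htop : is_top pref top) :
  (forall a : C, has_int_pm pref top a <->
     has_frac_pm pref (@p_uni R V) (q_plu R top) a)
  /\ (exists a : C, has_int_pm pref top a).
Proof.
have [i0 _] := card_gt0P hV; have [c0 _] := card_gt0P hC.
split; last exact: exists_int_pm hlin c0.
move=> a; split; first exact: frac_pm_of_int_pm.
by move=> /(hall_cond_of_frac_pm hV) /(hall_marriage i0) [f]; apply: int_pm_of_matching.
Qed.
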